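(* For all $y\in\{0,1\}^n$ with $y\ne0^n$ and all integers $r\ge0$, on the $\ell$-boson subspace, $$\|\tilde G_y\cdot\mathsf{Con}_r\|_{\mathrm{op}}\le\sqrt r+\sqrt{2+4r},\qquad\|\tilde H_y\cdot\mathsf{Con}_r\|_{\mathrm{op}}\le9r+9.$$
   Context: Bosonic setting with $2^n$ modes indexed by $\{0,1\}^n$: position operators $\hat a_x,\hat a_x^\dagger$ (standard bosonic commutation relations), vacuum $|\mathrm{vac}\rangle$, momentum operators $\tilde a_y=2^{-n/2}\sum_x(-1)^{x\cdot y}\hat a_x$ and $\tilde a_y^\dagger$ likewise, momentum Fock states $|u\rangle=\prod_y(\tilde a_y^\dagger)^{u_y}(u_y!)^{-1/2}|\mathrm{vac}\rangle$. We work in the subspace of exactly $\ell$ bosons. $\tilde G_y=\frac1{\sqrt\ell}\sum_x\tilde a^\dagger_{x\oplus y}\tilde a_x$ and $\tilde H_y=\frac1\ell\sum_{x,x'}\tilde a^\dagger_{x\oplus y}\tilde a^\dagger_{x'\oplus y}\tilde a_x\tilde a_{x'}$. $\mathsf{Con}_r$ is the projector onto the span of momentum Fock states $|u\rangle$ with $\sum_yu_y=\ell$ and $u_{0^n}\ge\ell-r$ ($r$-condensates). *)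

(* Bosons on 2^n modes, worked out in the momentum Fock basis. *)
From HB Require Import structures.
From mathcomp Require Import all_boot all_order all_algebra.
Set Implicit Arguments. Unset Strict Implicit. Unset Printing Implicit Defensive.
Import Order.TTheory GRing.Theory Num.Theory.
Local Open Scope ring_scope.

Definition bits (n : nat) := {ffun 'I_n -> bool}.
Definition bxor n (x y : bits n) : bits n := [ffun i => x i (+) y i].
Definition bzero n : bits n := [ffun _ => false].

Definition occ (n : nat) := {ffun bits n -> nat}.
Definition occ_inc n (u : occ n) (x : bits n) : occ n :=
  [ffun z => (u z + (z == x))%N].
Definition occ_dec n (u : occ n) (x : bits n) : occ n :=
  [ffun z => (u z - (z == x))%N].
(* occupation vectors of total l, enumerated through a finite type *)
Definition occ_of n l (u : {ffun bits n -> 'I_l.+1}) : occ n :=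
  [ffun z => nat_of_ord (u z)].
Definition total_is n l (u : {ffun bits n -> 'I_l.+1}) : bool :=
  (\sum_(z : bits n) nat_of_ord (u z) == l)%N.

Section Fock.
Variable C : numClosedFieldType.
Variable n : nat.

(* a state psi = sum_u psi(u) |u>, |u> the momentum Fock states *)
Definition state := occ n -> C.

(* momentum annihilation / creation operators on coefficient functions:
   at|u> = sqrt(u_x)|u - e_x>,  at^dag|u> = sqrt(u_x+1)|u + e_x> *)
Definition ann (x : bits n) (psi : state) : state :=
  fun w => sqrtC ((w x).+1)%:R * psi (occ_inc w x).
Definition cre (x : bits n) (psi : state) : state :=
  fun u => sqrtC (u x)%:R * psi (occ_dec u x).

Definition Gt (l : nat) (y : bits n) (psi : state) : state :=
  fun u => (sqrtC l%:R)^-1 *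
    \sum_(x : bits n) cre (bxor x y) (ann x psi) u.
Definition Ht (l : nat) (y : bits n) (psi : state) : state :=
  fun u => (l%:R)^-1 *
    \sum_(x : bits n) \sum_(x' : bits n)
      cre (bxor x y) (cre (bxor x' y) (ann x (ann x' psi))) u.

Definition Con (l r : nat) (psi : state) : state :=
  fun u => if (l - r <= u (bzero n))%N then psi u else 0.

Definition lnorm (l : nat) (psi : state) : C :=
  sqrtC (\sum_(u : {ffun bits n -> 'I_l.+1} | total_is u) `|psi (occ_of u)| ^+ 2).

Definition opnorm_le (l : nat) (A : state -> state) (c : C) : Prop :=
  forall psi : state, lnorm l (A psi) <= c * lnorm l psi.
End Fock.

From HB Require Import structures.
From mathcomp Require Import all_boot all_order all_algebra.
From mathcomp Require Import zify ring.
Import Order.TTheory GRing.Theory Num.Theory.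
Local Open Scope ring_scope.
Set Implicit Arguments. Unset Strict Implicit. Unset Printing Implicit Defensive.

(* On l bosons, G~_y Con_r acts on the momentum Fock basis by hopping one boson
   from mode x+y to mode x: (G psi)(u) = l^(-1/2) sum_x c_x(u) psi(u - e_(x+y) + e_x),
   a sum of weighted partial bijections between l-boson configurations.  A weighted
   Schur test (Cauchy-Schwarz after splitting c_x = a_x b_x) bounds its norm by the
   geometric mean of the largest row sum of a_x^2 and column sum of b_x^2.  Since an
   r-condensate has at most r bosons outside the mode 0, both sums are at most
   sqrt l (sqrt (r+1) + 2 sqrt r), whence
   ||G~_y Con_r|| <= sqrt (r+1) + 2 sqrt r <= sqrt r + sqrt (2 + 4r).
   For H~_y, the commutation relation [a_x, a_z^dag] = delta_xz gives H~_y = G~_y^2 - 1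
   on l bosons, and G~_y Con_r = Con_(r+1) G~_y Con_r, so ||H~_y Con_r|| is at most
   (sqrt (r+2) + 2 sqrt (r+1)) (sqrt (r+1) + 2 sqrt r) + 1 <= 9r + 9. *)

Lemma mulr2n_le_sqrD (R : numDomainType) (a b : R) :
  a \is Num.real -> b \is Num.real -> a * b *+ 2 <= a ^+ 2 + b ^+ 2.
Proof.
move=> ra rb; rewrite -subr_ge0.
have -> : a ^+ 2 + b ^+ 2 - a * b *+ 2 = (a - b) ^+ 2 by ring.
by rewrite -realEsqr rpredB.
Qed.

Lemma CauchySchwarz_sum (R : numDomainType) (I : finType) (P : pred I) (p q : I -> R) :
  (forall i, p i \is Num.real) -> (forall i, q i \is Num.real) ->
  (\sum_(i | P i) p i * q i) ^+ 2 <=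
  (\sum_(i | P i) p i ^+ 2) * (\sum_(i | P i) q i ^+ 2).
Proof.
move=> rp rq; rewrite -(ler_pMn2r (n := 2)) //.
have -> : (\sum_(i | P i) p i * q i) ^+ 2 *+ 2 =
    \sum_(i | P i) \sum_(j | P j) (p i * q j) * (p j * q i) *+ 2.
  rewrite expr2 big_distrl -sumrMnl; apply: eq_bigr => i _.
  by rewrite big_distrr -sumrMnl; apply: eq_bigr => j _ /=; ring.
have -> : (\sum_(i | P i) p i ^+ 2) * (\sum_(i | P i) q i ^+ 2) *+ 2 =
    \sum_(i | P i) \sum_(j | P j) ((p i * q j) ^+ 2 + (p j * q i) ^+ 2).
  have e : \sum_(i | P i) \sum_(j | P j) (p i * q j) ^+ 2 =
      (\sum_(i | P i) p i ^+ 2) * (\sum_(i | P i) q i ^+ 2).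
    rewrite big_distrl; apply: eq_bigr => i _.
    by rewrite big_distrr; apply: eq_bigr => j _; rewrite exprMn.
  rewrite -e mulr2n {2}exchange_big -big_split /=.
  by apply: eq_bigr => i _; rewrite -big_split.
apply: ler_sum => i _; apply: ler_sum => j _.
by apply: mulr2n_le_sqrD; rewrite rpredM.
Qed.

Section SqrtNat.
Variable C : numClosedFieldType.

Lemma sqrtC_natr_ge0 (m : nat) : 0 <= sqrtC (m%:R : C).
Proof. by rewrite sqrtC_ge0 ler0n. Qed.

Lemma sqrtC_natr_real (m : nat) : sqrtC (m%:R : C) \is Num.real.
Proof. by rewrite sqrtC_real ?ler0n. Qed.

Lemma ler_sqrtC_nat (a b : nat) : (a <= b)%N -> sqrtC (a%:R : C) <= sqrtC b%:R.
Proof. by move=> le_ab; rewrite ler_sqrtC ?ler_nat // qualifE /= ler0n. Qed.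

Lemma sqrtC_le_sqr (x y : C) : 0 <= x -> 0 <= y -> (sqrtC x <= y) = (x <= y ^+ 2).
Proof. by move=> x0 y0; rewrite -{1}(sqrCK y0) ler_sqrtC // qualifE /= exprn_ge0. Qed.

Lemma le_sqrtC_sqr (x y : C) : 0 <= x -> 0 <= y -> (x <= sqrtC y) = (x ^+ 2 <= y).
Proof. by move=> x0 y0; rewrite -{1}(sqrCK x0) ler_sqrtC // qualifE /= exprn_ge0. Qed.

Lemma natr_le_sqrtCM (m a b : nat) :
  (m <= a)%N -> (m <= b)%N -> (m%:R : C) <= sqrtC a%:R * sqrtC b%:R.
Proof.
move=> ma mb; rewrite -{1}[m%:R]sqrtCK expr2.
by apply: ler_pM; rewrite ?sqrtC_natr_ge0 ?ler_sqrtC_nat.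
Qed.

Lemma sqrtC_natrM_le (p q P Q : nat) (b : bool) :
  (b -> [|| p == 0, q == 0 | (p <= P) && (q <= Q)])%N ->
  sqrtC (p%:R : C) * sqrtC q%:R * b%:R <= sqrtC P%:R * sqrtC Q%:R.
Proof.
have PQ0 : 0 <= sqrtC (P%:R : C) * sqrtC Q%:R by rewrite mulr_ge0 ?sqrtC_natr_ge0.
case: b => /= [/(_ isT)|]; last by rewrite mulr0.
rewrite mulr1 => /or3P[/eqP ->|/eqP ->|/andP[pP qQ]].
- by rewrite sqrtC0 mul0r.
- by rewrite sqrtC0 mulr0.
by apply: ler_pM; rewrite ?sqrtC_natr_ge0 ?ler_sqrtC_nat.
Qed.

End SqrtNat.

Section Bits.
Variable n : nat.
Implicit Types x y : bits n.
Local Notation o := (bzero n).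

Lemma bxorK y : involutive (fun x => bxor x y).
Proof. by move=> x; apply/ffunP => i; rewrite !ffunE addbK. Qed.

Lemma bxor_inj y : injective (fun x => bxor x y).
Proof. exact: inv_inj (bxorK y). Qed.

Lemma bxor0x y : bxor o y = y.
Proof. by apply/ffunP => i; rewrite !ffunE. Qed.

Lemma bxorxx y : bxor y y = o.
Proof. by apply/ffunP => i; rewrite !ffunE addbb. Qed.

Lemma bxor_eq0 x y : (bxor x y == o) = (x == y).
Proof. by rewrite -(inj_eq (bxor_inj (y := y))) /= bxorK bxor0x. Qed.

Lemma bxor_eql x y : y != o -> (bxor x y == x) = false.
Proof.
move=> y0; apply/negbTE; apply: contra y0 => /eqP/ffunP xyx.
by apply/eqP/ffunP => i; move: (xyx i); rewrite !ffunE; case: (x i); case: (y i).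
Qed.

End Bits.

Section Occupations.
Variable n : nat.
Implicit Types (u v w : occ n) (x z : bits n).
Local Notation o := (bzero n).

Definition occ_tot w : nat := (\sum_z w z)%N.

Definition hop x z w : occ n := occ_inc (occ_dec w z) x.

Lemma occ_tot_inc w x : occ_tot (occ_inc w x) = (occ_tot w).+1.
Proof.
rewrite /occ_tot (bigD1 x) //= [in RHS](bigD1 x) //= ffunE eqxx addn1 addSn.
by congr (_ + _)%N.+1; apply: eq_bigr => z /negbTE zx; rewrite ffunE zx addn0.
Qed.

Lemma occ_tot_dec w x : (0 < w x)%N -> occ_tot (occ_dec w x) = (occ_tot w).-1.
Proof.
move=> wx; rewrite /occ_tot (bigD1 x) //= [in RHS](bigD1 x) //= ffunE eqxx.
under eq_bigr => z /negbTE zx do rewrite ffunE zx subn0.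
by rewrite -subn1 addnBAC.
Qed.

Lemma occ_le_tot w z : (w z <= occ_tot w)%N.
Proof. by rewrite /occ_tot (bigD1 z) //= leq_addr. Qed.

Lemma occ_tot_hop w x z : (0 < w z)%N -> occ_tot (hop x z w) = occ_tot w.
Proof.
by move=> wz; rewrite occ_tot_inc occ_tot_dec // prednK // (leq_trans wz) ?occ_le_tot.
Qed.

Lemma occ_le_tot2 w x z : x != z -> (w x + w z <= occ_tot w)%N.
Proof.
move=> xz; rewrite /occ_tot (bigD1 x) //= (bigD1 z) 1?eq_sym //=.
by rewrite addnA leq_addr.
Qed.

Lemma occ_inc_other w x t : t != x -> occ_inc w x t = w t.
Proof. by move=> tx; rewrite ffunE (negbTE tx) addn0. Qed.

Lemma occ_dec_other w x t : t != x -> occ_dec w x t = w t.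
Proof. by move=> tx; rewrite ffunE (negbTE tx) subn0. Qed.

Lemma occ_incK w x : occ_dec (occ_inc w x) x = w.
Proof. by apply/ffunP => z; rewrite !ffunE addnK. Qed.

Lemma occ_decK w x : (0 < w x)%N -> occ_inc (occ_dec w x) x = w.
Proof.
move=> wx; apply/ffunP => z; rewrite !ffunE.
by case: eqP => [->|_]; rewrite ?subnK ?subn0 ?addn0.
Qed.

Lemma occ_inc_decC w x z : x != z -> occ_dec (occ_inc w x) z = occ_inc (occ_dec w z) x.
Proof.
move=> xz; apply/ffunP => t; rewrite !ffunE.
by case: (t =P x) => [tx|_]; rewrite ?addn0 // tx (negbTE xz) !subn0.
Qed.

Lemma hop_to w x z : x != z -> hop x z w x = (w x).+1.
Proof. by move=> xz; rewrite !ffunE eqxx (negbTE xz) subn0 addn1. Qed.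

Lemma hop_from w x z : x != z -> hop x z w z = (w z).-1.
Proof. by move=> xz; rewrite !ffunE eqxx eq_sym (negbTE xz) addn0 subn1. Qed.

Lemma hop_other w x z t : t != x -> t != z -> hop x z w t = w t.
Proof. by move=> tx tz; rewrite occ_inc_other ?occ_dec_other. Qed.

Lemma hop_le w x z t : (hop x z w t <= (w t).+1)%N.
Proof. by rewrite !ffunE -addn1 leq_add ?leq_subr ?leq_b1. Qed.

Lemma hopK w x z : (0 < w z)%N -> hop z x (hop x z w) = w.
Proof. by move=> wz; rewrite /hop occ_incK occ_decK. Qed.

Lemma hop_gt0 w x z : (0 < hop x z w x)%N.
Proof. by rewrite ffunE eqxx addn1. Qed.

Lemma hop_sym u v x z :
  ((v == hop x z u) && (0 < u z)%N) = ((u == hop z x v) && (0 < v x)%N).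
Proof.
by apply/andP/andP => -[/eqP -> h]; rewrite hopK ?hop_gt0.
Qed.

Lemma sum_occ_inj_le w (f : bits n -> bits n) (P : pred (bits n)) :
  injective f -> (forall x, P x -> f x != o) ->
  (\sum_(x | P x) w (f x) <= occ_tot w - w o)%N.
Proof.
move=> f_inj Pf.
have -> : (occ_tot w - w o = \sum_(z | z != o) w z)%N by rewrite /occ_tot (bigD1 o) //= addKn.
rewrite [X in (_ <= X)%N](reindex_inj f_inj) /=.
exact: (sub_le_big leqnn (fun a b => leq_addr b a)).
Qed.

End Occupations.

Section BosonSums.
Variables (C : numClosedFieldType) (n l : nat).
Local Notation cfg := {ffun bits n -> 'I_l.+1}.
Implicit Types (F G : occ n -> C) (w : occ n) (x z : bits n) (chi phi psi : state C n).

Lemma occ_tot_occ_of (u : cfg) : total_is u -> occ_tot (occ_of u) = l.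
Proof. by move=> /eqP; apply: etrans; apply: eq_bigr => z _; rewrite ffunE. Qed.

Lemma occ_of_inj : injective (@occ_of n l).
Proof.
by move=> u v /ffunP uv; apply/ffunP => z; apply: val_inj; move: (uv z); rewrite !ffunE.
Qed.

Definition lsum F : C := \sum_(u : cfg | total_is u) F (occ_of u).

Lemma eq_lsum F G : (forall w, occ_tot w = l -> F w = G w) -> lsum F = lsum G.
Proof. by move=> FG; apply: eq_bigr => u /occ_tot_occ_of /FG. Qed.

Lemma ler_lsum F G : (forall w, occ_tot w = l -> F w <= G w) -> lsum F <= lsum G.
Proof. by move=> FG; apply: ler_sum => u /occ_tot_occ_of /FG. Qed.

Lemma lsum_ge0 F : (forall w, 0 <= F w) -> 0 <= lsum F.
Proof. by move=> F0; apply: sumr_ge0 => u _. Qed.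

Lemma lsumC (F : occ n -> occ n -> C) :
  lsum (fun u => lsum (F u)) = lsum (fun v => lsum (F^~ v)).
Proof. exact: exchange_big. Qed.

Lemma lsum_pick F w : occ_tot w = l -> lsum (fun v => if v == w then F v else 0) = F w.
Proof.
move=> tw; have wl z : (w z < l.+1)%N by rewrite ltnS -tw occ_le_tot.
pose u : cfg := [ffun z => Ordinal (wl z)].
have uw : occ_of u = w by apply/ffunP => z; rewrite !ffunE.
have tu : total_is u by apply/eqP; apply: etrans tw; apply: eq_bigr => z _; rewrite ffunE.
rewrite /lsum (bigD1 u) //= uw eqxx big1 ?addr0 // => v /andP[_ vu].
by rewrite -uw (inj_eq occ_of_inj) (negbTE vu).
Qed.

Lemma lsum_hop x z (H : occ n -> occ n -> C) :
  lsum (fun u => if (0 < u z)%N then H u (hop x z u) else 0) =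
  lsum (fun v => if (0 < v x)%N then H (hop z x v) v else 0).
Proof.
have expand x' z' (K : occ n -> occ n -> C) :
    lsum (fun u => if (0 < u z')%N then K u (hop x' z' u) else 0) =
    lsum (fun u => lsum (fun v => if (v == hop x' z' u) && (0 < u z')%N then K u v else 0)).
  apply: eq_lsum => u tu; case: ifP => uz; last by apply/esym/big1 => v _; rewrite andbF.
  rewrite -(lsum_pick (K u)) ?occ_tot_hop //.
  by apply: eq_lsum => v _; rewrite andbT.
rewrite expand (expand _ _ (fun v u => H u v)) lsumC.
by apply: eq_lsum => v _; apply: eq_lsum => u _; rewrite hop_sym.
Qed.

Definition sqnorm (psi : state C n) : C := lsum (fun w => `|psi w| ^+ 2).

Lemma lnormE psi : lnorm l psi = sqrtC (sqnorm psi).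
Proof. by []. Qed.

Lemma sqnorm_ge0 psi : 0 <= sqnorm psi.
Proof. by apply: lsum_ge0 => w; rewrite exprn_ge0. Qed.

Lemma lnorm_ge0 psi : 0 <= lnorm l psi.
Proof. by rewrite sqrtC_ge0 sqnorm_ge0. Qed.

Lemma eq_lnorm phi psi :
  (forall w, occ_tot w = l -> phi w = psi w) -> lnorm l phi = lnorm l psi.
Proof.
by move=> eq_phi; rewrite !lnormE; congr sqrtC; apply: eq_lsum => w /eq_phi ->.
Qed.

Lemma lnorm_le_sqnorm phi psi (k : C) :
  0 <= k -> sqnorm phi <= k ^+ 2 * sqnorm psi -> lnorm l phi <= k * lnorm l psi.
Proof.
move=> k0 le_phi; rewrite !lnormE -(sqrCK k0) -sqrtCM ?qualifE /= ?exprn_ge0 ?sqnorm_ge0 //.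
by rewrite ler_sqrtC // qualifE /= ?mulr_ge0 ?exprn_ge0 ?sqnorm_ge0.
Qed.

Lemma sqnormZ (c : C) psi : sqnorm (fun w => c * psi w) = `|c| ^+ 2 * sqnorm psi.
Proof. by rewrite /sqnorm /lsum mulr_sumr; apply: eq_bigr => u _; rewrite normrM exprMn. Qed.

Lemma lnorm_le_add chi phi psi :
  (forall w, occ_tot w = l -> `|chi w| <= `|phi w| + `|psi w|) ->
  lnorm l chi <= lnorm l phi + lnorm l psi.
Proof.
move=> le_chi; rewrite [X in X <= _]lnormE sqrtC_le_sqr ?sqnorm_ge0 ?addr_ge0 ?lnorm_ge0 //.
have cs : lsum (fun w => `|phi w| * `|psi w|) <= lnorm l phi * lnorm l psi.
  rewrite !lnormE -sqrtCM ?qualifE /= ?sqnorm_ge0 //.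
  rewrite le_sqrtC_sqr ?mulr_ge0 ?sqnorm_ge0 ?lsum_ge0 // => [|w]; last exact: mulr_ge0.
  by apply: CauchySchwarz_sum => u; apply: normr_real.
apply: (@le_trans _ _ (lsum (fun w => (`|phi w| + `|psi w|) ^+ 2))).
  by apply: ler_lsum => w /le_chi le_w; rewrite !expr2 ler_pM.
have -> : lsum (fun w => (`|phi w| + `|psi w|) ^+ 2) =
    sqnorm phi + sqnorm psi + lsum (fun w => `|phi w| * `|psi w|) *+ 2.
  by rewrite /sqnorm /lsum -sumrMnl -!big_split; apply: eq_bigr => u _ /=; ring.
have -> : (lnorm l phi + lnorm l psi) ^+ 2 =
    sqnorm phi + sqnorm psi + (lnorm l phi * lnorm l psi) *+ 2.
  by rewrite sqrrD !lnormE !sqrtCK addrAC.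
by rewrite lerD2l lerMn2r cs.
Qed.

Lemma lnorm_Con_le r psi : lnorm l (Con l r psi) <= lnorm l psi.
Proof.
rewrite -[X in _ <= X]mul1r; apply: lnorm_le_sqnorm => //.
rewrite expr1n mul1r; apply: ler_lsum => w _; rewrite /Con.
by case: ifP; rewrite ?normr0 ?expr0n ?exprn_ge0.
Qed.

End BosonSums.

Section SchurTest.
Variables (C : numClosedFieldType) (n l : nat) (s : bits n -> bits n).
Variables (a b : bits n -> occ n -> C) (alpha beta : C).
Implicit Types (u v : occ n) (x : bits n).
Hypotheses (a_ge0 : forall x u, 0 <= a x u) (b_ge0 : forall x u, 0 <= b x u).
Hypothesis alpha_ge0 : 0 <= alpha.
Hypothesis row_sum_le : forall u, occ_tot u = l -> \sum_x a x u ^+ 2 <= alpha.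
Hypothesis col_sum_le : forall v, occ_tot v = l ->
  \sum_x (if (0 < v x)%N then b x (hop (s x) x v) ^+ 2 else 0) <= beta.

Lemma Schur_test (psi : state C n) :
  sqnorm l (fun u => \sum_x
    (if (0 < u (s x))%N then a x u * b x u * psi (hop x (s x) u) else 0))
  <= alpha * beta * sqnorm l psi.
Proof.
pose T x u := if (0 < u (s x))%N then b x u ^+ 2 * `|psi (hop x (s x) u)| ^+ 2 else 0.
have row u : occ_tot u = l -> `|\sum_x
    (if (0 < u (s x))%N then a x u * b x u * psi (hop x (s x) u) else 0)| ^+ 2
    <= alpha * \sum_x T x u.
  pose t x := if (0 < u (s x))%N then b x u * `|psi (hop x (s x) u)| else 0.
  have t_ge0 x : 0 <= t x by rewrite /t; case: ifP; rewrite ?mulr_ge0.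
  move=> tu; apply: (@le_trans _ _ ((\sum_x a x u * t x) ^+ 2)).
    have at_ge0 : 0 <= \sum_x a x u * t x by apply: sumr_ge0 => x _; rewrite mulr_ge0.
    rewrite lerXn2r ?nnegrE //.
    apply: (le_trans (ler_norm_sum _ _ _)); apply: ler_sum => x _; rewrite /t.
    case: ifP => _; last by rewrite normr0 mulr0.
    by rewrite !normrM (ger0_norm (a_ge0 _ _)) (ger0_norm (b_ge0 _ _)) mulrA.
  apply: le_trans; first by apply: CauchySchwarz_sum => x; rewrite ger0_real.
  apply: ler_pM; rewrite ?row_sum_le //.
  - by apply: sumr_ge0 => x _; rewrite exprn_ge0.
  - by apply: sumr_ge0 => x _; rewrite exprn_ge0.
  - by apply: ler_sum => x _; rewrite /t /T; case: ifP; rewrite ?expr0n // exprMn.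
have col : \sum_x lsum l (T x) <= beta * sqnorm l psi.
  have hopT x : lsum l (T x) = lsum l (fun v =>
      if (0 < v x)%N then b x (hop (s x) x v) ^+ 2 * `|psi v| ^+ 2 else 0).
    exact: (lsum_hop l x (s x) (fun u v => b x u ^+ 2 * `|psi v| ^+ 2)).
  rewrite (eq_bigr _ (fun x _ => hopT x)) /lsum exchange_big /= /sqnorm /lsum mulr_sumr.
  apply: ler_sum => u /occ_tot_occ_of tu.
  set p2 := `|psi (occ_of u)| ^+ 2.
  rewrite (eq_bigr (fun x => (if (0 < occ_of u x)%N then
      b x (hop (s x) x (occ_of u)) ^+ 2 else 0) * p2)) => [|x _]; last first.
    by case: ifP; rewrite ?mul0r.
  by rewrite -mulr_suml ler_wpM2r ?exprn_ge0 ?col_sum_le.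
apply: (le_trans (ler_lsum (row))).
by rewrite /lsum -mulr_sumr exchange_big -mulrA ler_wpM2l.
Qed.

End SchurTest.

Section Ladder.
Variables (C : numClosedFieldType) (n : nat).
Implicit Types (x z : bits n) (u w : occ n) (phi psi : state C n).

Lemma cre_annE z x psi u :
  cre z (ann x psi) u =
  sqrtC (u z)%:R * sqrtC ((occ_dec u z) x).+1%:R * psi (hop x z u).
Proof. by rewrite /cre /ann mulrA. Qed.

Lemma cre_ann_diag x psi u : cre x (ann x psi) u = (u x)%:R * psi u.
Proof.
rewrite cre_annE; case: (posnP (u x)) => [->|ux]; first by rewrite sqrtC0 !mul0r.
by rewrite /hop occ_decK // ffunE eqxx subn1 prednK // -expr2 sqrtCK.
Qed.

Lemma sum_cre_ann psi u : \sum_x cre x (ann x psi) u = (occ_tot u)%:R * psi u.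
Proof.
by rewrite (eq_bigr _ (fun x _ => cre_ann_diag x psi u)) -mulr_suml -natr_sum.
Qed.

Lemma ann_cre x z psi w :
  ann x (cre z psi) w = cre z (ann x psi) w + (if x == z then psi w else 0).
Proof.
case: (x =P z) => [<-|/eqP xz].
  rewrite cre_ann_diag /ann /cre occ_incK ffunE eqxx addn1 mulrA -expr2 sqrtCK.
  by rewrite -natr1 mulrDl mul1r.
by rewrite addr0 /ann /cre occ_inc_other 1?eq_sym // occ_dec_other // occ_inc_decC // mulrCA.
Qed.

Lemma cre_ann_cre z x z' psi u :
  cre z (ann x (cre z' psi)) u =
  cre z (cre z' (ann x psi)) u + (if x == z' then cre z psi u else 0).
Proof.
by rewrite {1}/cre ann_cre mulrDr; case: (x == z'); rewrite ?mulr0.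
Qed.

Lemma cre_ann_sum z x (c : C) (I : finType) (F : I -> state C n) u :
  cre z (ann x (fun w => c * \sum_i F i w)) u = c * \sum_i cre z (ann x (F i)) u.
Proof. by rewrite /cre /ann !mulr_sumr; apply: eq_bigr => i _; ring. Qed.

Lemma eq_Gt l y phi psi u :
  (forall w, phi w = psi w) -> Gt l y phi u = Gt l y psi u.
Proof.
by move=> eq_phi; rewrite /Gt; congr (_ * _); apply: eq_bigr => x _; rewrite /cre /ann eq_phi.
Qed.

Lemma Ht_GtGt l y phi u : (0 < l)%N -> occ_tot u = l ->
  Ht l y phi u = Gt l y (Gt l y phi) u - phi u.
Proof.
move=> l_gt0 tu.
have l0 : (l%:R : C) != 0 by rewrite pnatr_eq0 -lt0n.
have isqrt2 : (sqrtC l%:R)^-1 * (sqrtC l%:R)^-1 = (l%:R : C)^-1.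
  by rewrite -invfM -expr2 sqrtCK.
have GGE : Gt l y (Gt l y phi) u = (l%:R)^-1 *
    (\sum_x \sum_x' cre (bxor x y) (cre (bxor x' y) (ann x (ann x' phi))) u +
     \sum_x \sum_x' (if x == bxor x' y then cre (bxor x y) (ann x' phi) u else 0)).
  rewrite {1}/Gt -isqrt2 -mulrA; congr (_ * _).
  rewrite -big_split mulr_sumr; apply: eq_bigr => x _ /=.
  rewrite {1}/Gt cre_ann_sum -big_split; congr (_ * _).
  by apply: eq_bigr => x' _; rewrite cre_ann_cre.
have number : \sum_x \sum_x' (if x == bxor x' y then cre (bxor x y) (ann x' phi) u else 0)
    = l%:R * phi u.
  rewrite exchange_big -tu -sum_cre_ann; apply: eq_bigr => x' _.
  rewrite (bigD1 (bxor x' y)) //= eqxx bxorK big1 ?addr0 // => x /negbTE -> //.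
by rewrite GGE number /Ht mulrDr mulrA mulVf // mul1r addrK.
Qed.

End Ladder.

Definition Gbound (C : numClosedFieldType) (r : nat) : C :=
  sqrtC r.+1%:R + 2 * sqrtC r%:R.

Lemma Gbound_ge0 (C : numClosedFieldType) r : 0 <= Gbound C r.
Proof. by rewrite addr_ge0 ?mulr_ge0 ?sqrtC_natr_ge0. Qed.

Section GtCondensate.
Variables (C : numClosedFieldType) (n l : nat) (y : bits n) (r : nat).
Hypothesis y_neq0 : y != bzero n.
Implicit Types (x : bits n) (u v : occ n) (psi : state C n).
Local Notation o := (bzero n).

Definition Gcond x u : C := (l - r <= hop x (bxor x y) u o)%N%:R.

Definition Gcoef x u : C :=
  sqrtC (u (bxor x y))%:R * sqrtC ((occ_dec u (bxor x y)) x).+1%:R * Gcond x u.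

Lemma Gt_ConE psi u :
  Gt l y (Con l r psi) u = (sqrtC l%:R)^-1 * \sum_x
    (if (0 < u (bxor x y))%N then Gcoef x u * psi (hop x (bxor x y) u) else 0).
Proof.
rewrite /Gt; congr (_ * _); apply: eq_bigr => x _; rewrite cre_annE /Con /Gcoef /Gcond.
case: posnP => [->|_]; first by rewrite sqrtC0 !mul0r.
by case: (l - r <= _)%N; rewrite ?mulr1 ?mulr0 ?mul0r.
Qed.

(* The two hops that touch the condensate mode [o] share their amplitude
   evenly; every other hop puts [sqrt u_(x+y)] on the row side, where these
   occupations add up to the at most [r] excited bosons, and [sqrt (u_x + 1)]
   on the column side. *)
Definition touches_condensate x := (x == o) || (x == y).

Definition row_wt x u : C :=
  if touches_condensate x then sqrtC (Gcoef x u) else sqrtC (u (bxor x y))%:R * Gcond x u.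

Definition col_wt x u : C :=
  if touches_condensate x then sqrtC (Gcoef x u) else sqrtC (u x).+1%:R * Gcond x u.

Lemma Gcond_sqr x u : Gcond x u ^+ 2 = Gcond x u.
Proof. by rewrite /Gcond; case: (l - r <= _)%N; rewrite ?expr1n ?expr0n. Qed.

Lemma row_wt_ge0 x u : 0 <= row_wt x u.
Proof.
by rewrite /row_wt /Gcoef /Gcond; case: ifP; rewrite ?sqrtC_ge0 ?mulr_ge0 ?sqrtC_natr_ge0.
Qed.

Lemma col_wt_ge0 x u : 0 <= col_wt x u.
Proof.
by rewrite /col_wt /Gcoef /Gcond; case: ifP; rewrite ?sqrtC_ge0 ?mulr_ge0 ?sqrtC_natr_ge0.
Qed.

Lemma bxory_neq x : x != bxor x y.
Proof. by rewrite eq_sym bxor_eql. Qed.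

Lemma GcoefE x u :
  Gcoef x u = sqrtC (u (bxor x y))%:R * sqrtC (u x).+1%:R * Gcond x u.
Proof. by rewrite /Gcoef occ_dec_other ?bxory_neq. Qed.

Lemma Gcond_hop x v : (0 < v x)%N -> Gcond x (hop (bxor x y) x v) = (l - r <= v o)%N%:R.
Proof. by move=> vx; rewrite /Gcond hopK. Qed.

Lemma Gcoef_hop x v : (0 < v x)%N ->
  Gcoef x (hop (bxor x y) x v) =
  sqrtC (v (bxor x y)).+1%:R * sqrtC (v x)%:R * (l - r <= v o)%N%:R.
Proof.
by move=> vx; rewrite GcoefE Gcond_hop // hop_to ?hop_from ?bxor_eql // prednK.
Qed.

Lemma row_col_wtM x u : row_wt x u * col_wt x u = Gcoef x u.
Proof.
rewrite /row_wt /col_wt; case: ifP => _; first by rewrite -expr2 sqrtCK.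
by rewrite GcoefE mulrACA -expr2 Gcond_sqr.
Qed.

Lemma sqr_sqrtC_Gcond m x u : (sqrtC m%:R * Gcond x u) ^+ 2 = m%:R * Gcond x u.
Proof. by rewrite exprMn sqrtCK Gcond_sqr. Qed.

Lemma natr_excited_le (S w0 : nat) :
  (S <= l - w0)%N -> ((S * (l - r <= w0))%N%:R : C) <= sqrtC l%:R * sqrtC r%:R.
Proof.
move=> S_le; apply: natr_le_sqrtCM.
all: by case: (leqP (l - r) w0) => /= ?; rewrite ?muln1 ?muln0; lia.
Qed.

Lemma Gbound_split (a b c : C) :
  a <= sqrtC r.+1%:R * sqrtC l%:R -> b <= sqrtC l%:R * sqrtC r%:R ->
  c <= sqrtC l%:R * sqrtC r%:R -> a + (b + c) <= sqrtC l%:R * Gbound C r.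
Proof.
have -> : sqrtC l%:R * Gbound C r =
    sqrtC r.+1%:R * sqrtC l%:R + (sqrtC l%:R * sqrtC r%:R + sqrtC l%:R * sqrtC r%:R).
  by rewrite /Gbound; ring.
by move=> ha hb hc; rewrite !lerD.
Qed.

Lemma row_wt_sum_le u : occ_tot u = l -> \sum_x row_wt x u ^+ 2 <= sqrtC l%:R * Gbound C r.
Proof.
move=> tu; have := occ_le_tot2 u y_neq0; rewrite tu => uyo.
rewrite (bigD1 o) //= (bigD1 y) //= {1 2}/row_wt /touches_condensate !eqxx orbT !sqrtCK.
have row_o : Gcoef o u <= sqrtC r.+1%:R * sqrtC l%:R.
  rewrite GcoefE /Gcond bxor0x hop_to 1?eq_sym //.
  by apply: sqrtC_natrM_le => /=; lia.
have row_y : Gcoef y u <= sqrtC l%:R * sqrtC r%:R.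
  rewrite GcoefE /Gcond bxorxx hop_from //.
  by apply: sqrtC_natrM_le => /=; lia.
have row_rest : \sum_(x | (x != o) && (x != y)) row_wt x u ^+ 2 <= sqrtC l%:R * sqrtC r%:R.
  have -> : \sum_(x | (x != o) && (x != y)) row_wt x u ^+ 2 =
      ((\sum_(x | (x != o) && (x != y)) u (bxor x y)) * (l - r <= u o))%N%:R.
    rewrite big_distrl natr_sum /=; apply: eq_bigr => x /andP[xo xy].
    rewrite /row_wt /touches_condensate (negbTE xo) (negbTE xy) sqr_sqrtC_Gcond /Gcond.
    by rewrite hop_other 1?eq_sym ?bxor_eq0 // natrM.
  apply: natr_excited_le; rewrite -tu.
  apply: sum_occ_inj_le => [|x /andP[_]]; first exact: bxor_inj.
  by rewrite bxor_eq0.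
exact: Gbound_split.
Qed.

Lemma col_wt_sum_le v : occ_tot v = l ->
  \sum_x (if (0 < v x)%N then col_wt x (hop (bxor x y) x v) ^+ 2 else 0)
  <= sqrtC l%:R * Gbound C r.
Proof.
move=> tv; have := occ_le_tot2 v y_neq0; rewrite tv => vyo.
rewrite (bigD1 o) //= (bigD1 y) //= {1 2}/col_wt /touches_condensate !eqxx orbT !sqrtCK.
have col_o : (if (0 < v o)%N then Gcoef o (hop (bxor o y) o v) else 0)
    <= sqrtC r.+1%:R * sqrtC l%:R.
  case: ifP => [vo|_]; last by rewrite mulr_ge0 ?sqrtC_natr_ge0.
  by rewrite Gcoef_hop // bxor0x; apply: sqrtC_natrM_le => /=; lia.
have col_y : (if (0 < v y)%N then Gcoef y (hop (bxor y y) y v) else 0)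
    <= sqrtC l%:R * sqrtC r%:R.
  case: ifP => [vy|_]; last by rewrite mulr_ge0 ?sqrtC_natr_ge0.
  by rewrite Gcoef_hop // bxorxx; apply: sqrtC_natrM_le => /=; lia.
have col_rest : \sum_(x | (x != o) && (x != y))
    (if (0 < v x)%N then col_wt x (hop (bxor x y) x v) ^+ 2 else 0)
    <= sqrtC l%:R * sqrtC r%:R.
  have -> : \sum_(x | (x != o) && (x != y))
      (if (0 < v x)%N then col_wt x (hop (bxor x y) x v) ^+ 2 else 0) =
      ((\sum_(x | (x != o) && (x != y)) v x) * (l - r <= v o))%N%:R.
    rewrite big_distrl natr_sum /=; apply: eq_bigr => x /andP[xo xy].
    rewrite /col_wt /touches_condensate (negbTE xo) (negbTE xy) /=.
    case: posnP => [->|vx]; first by rewrite mul0n.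
    rewrite sqr_sqrtC_Gcond Gcond_hop // hop_from ?bxor_eql //.
    by rewrite (prednK vx) natrM.
  apply: natr_excited_le; rewrite -tv.
  by apply: (@sum_occ_inj_le _ v id) => // t /andP[].
exact: Gbound_split.
Qed.

Lemma Gt_Con_bound psi : (0 < l)%N ->
  lnorm l (Gt l y (Con l r psi)) <= Gbound C r * lnorm l psi.
Proof.
move=> l_gt0; have sqrtl_gt0 : 0 < sqrtC (l%:R : C) by rewrite sqrtC_gt0 ltr0n.
have GE u : Gt l y (Con l r psi) u = (sqrtC l%:R)^-1 * \sum_x (if (0 < u (bxor x y))%N
    then row_wt x u * col_wt x u * psi (hop x (bxor x y) u) else 0).
  by rewrite Gt_ConE; under eq_bigr do rewrite -row_col_wtM.
rewrite (eq_lnorm (fun u _ => GE u)).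
apply: lnorm_le_sqnorm; first exact: Gbound_ge0.
have alpha_ge0 : 0 <= sqrtC (l%:R : C) * Gbound C r by rewrite mulr_ge0 ?Gbound_ge0 ?ltW.
have schur := Schur_test (s := fun x => bxor x y)
  row_wt_ge0 col_wt_ge0 alpha_ge0 row_wt_sum_le col_wt_sum_le psi.
rewrite sqnormZ; apply: le_trans (ler_wpM2l (exprn_ge0 _ (normr_ge0 _)) schur) _.
rewrite le_eqVlt; apply/orP; left; apply/eqP.
by rewrite normfV ger0_norm ?ltW //; field; rewrite gt_eqF.
Qed.

Lemma Gt_Con_shift psi u :
  Gt l y (Con l r psi) u = Con l r.+1 (Gt l y (Con l r psi)) u.
Proof.
rewrite {2}/Con; case: ifP => // /negbT; rewrite -ltnNge => uo_small.
rewrite Gt_ConE big1 ?mulr0 // => x _; case: ifP => // _.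
rewrite /Gcoef /Gcond; case: (leqP (l - r)) => [|_]; last by rewrite !mulr0 mul0r.
by have := hop_le u x (bxor x y) o; lia.
Qed.

End GtCondensate.

Lemma Gbound_le (C : numClosedFieldType) r :
  Gbound C r <= sqrtC (r%:R : C) + sqrtC (2 + 4 * r%:R).
Proof.
have sum_sqr : (2 + 4 * r%:R : C) =
    (sqrtC r.+1%:R + sqrtC r%:R) ^+ 2 + (sqrtC r.+1%:R - sqrtC r%:R) ^+ 2.
  by rewrite sqrrD sqrrB !sqrtCK -natr1; ring.
have -> : Gbound C r = sqrtC r%:R + (sqrtC r.+1%:R + sqrtC r%:R) by rewrite /Gbound; ring.
rewrite lerD2l le_sqrtC_sqr ?addr_ge0 ?mulr_ge0 ?sqrtC_natr_ge0 ?ler0n //.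
by rewrite sum_sqr lerDl -realEsqr rpredB ?sqrtC_natr_real.
Qed.

Lemma Gbound_mul_le (C : numClosedFieldType) r :
  Gbound C r.+1 * Gbound C r + 1 <= 9 * r%:R + 9.
Proof.
rewrite /Gbound -subr_ge0 -(@pmulr_lge0 _ 2) //.
set A := sqrtC (r.+2%:R : C); set B := sqrtC (r.+1%:R : C); set D := sqrtC (r%:R : C).
have -> : (9 * r%:R + 9 - ((A + 2 * B) * (B + 2 * D) + 1)) * 2 =
    (A - B) ^+ 2 + 2 * (A - D) ^+ 2 + 4 * (B - D) ^+ 2 + 1
    + 3 * (r%:R + 2 - A ^+ 2) + 9 * (r%:R + 1 - B ^+ 2) + 6 * (r%:R - D ^+ 2).
  by ring.
have sA : A ^+ 2 = r%:R + 2 by rewrite sqrtCK -!natr1; ring.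
have sB : B ^+ 2 = r%:R + 1 by rewrite sqrtCK natr1.
have sD : D ^+ 2 = r%:R by rewrite sqrtCK.
have sqrB_ge0 (p q : C) : p \is Num.real -> q \is Num.real -> 0 <= (p - q) ^+ 2.
  by move=> rp rq; rewrite -realEsqr rpredB.
have rA : A \is Num.real := sqrtC_natr_real C r.+2.
have rB : B \is Num.real := sqrtC_natr_real C r.+1.
have rD : D \is Num.real := sqrtC_natr_real C r.
rewrite sA sB sD !subrr !mulr0 !addr0 addr_ge0 //.
have := sqrB_ge0 _ _ rA rB; have := sqrB_ge0 _ _ rA rD; have := sqrB_ge0 _ _ rB rD.
by move=> *; rewrite !addr_ge0 // mulr_ge0.
Qed.


Theorem mainTheorem11 (C : numClosedFieldType) (n l : nat) (hl : (0 < l)%N)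
    (y : bits n) (hy : y != bzero n) (r : nat) :
  opnorm_le l (fun psi : state C n => Gt l y (Con l r psi))
    (sqrtC (r%:R : C) + sqrtC (2 + 4 * r%:R)) /\
  opnorm_le l (fun psi : state C n => Ht l y (Con l r psi)) (9 * r%:R + 9).
Proof.
split => psi.
  apply: le_trans (Gt_Con_bound r hy psi hl) _.
  by rewrite ler_wpM2r ?lnorm_ge0 ?Gbound_le.
have GG : lnorm l (Gt l y (Gt l y (Con l r psi))) <=
    Gbound C r.+1 * (Gbound C r * lnorm l psi).
  rewrite (@eq_lnorm _ _ _ _ (Gt l y (Con l r.+1 (Gt l y (Con l r psi))))); last first.
    by move=> u _; apply: eq_Gt => w; apply: Gt_Con_shift.
  apply: le_trans (Gt_Con_bound r.+1 hy _ hl) _.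
  by rewrite ler_wpM2l ?Gbound_ge0 ?Gt_Con_bound.
have H_le : lnorm l (Ht l y (Con l r psi)) <=
    lnorm l (Gt l y (Gt l y (Con l r psi))) + lnorm l (Con l r psi).
  by apply: lnorm_le_add => w tw; rewrite Ht_GtGt // ler_normB.
apply: le_trans H_le (le_trans (lerD GG (lnorm_Con_le _ _ _)) _).
by rewrite mulrA -[X in _ + X]mul1r -mulrDl ler_wpM2r ?lnorm_ge0 ?Gbound_mul_le.
Qed.
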